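(* Let $n\geq 4$ and let $\tau: T_n\to \mathrm{GL}_{n+1}(\mathbb{C})$ be a homogeneous $3$-local representation of the twin group $T_n$. Then $\tau$ is equivalent to one of the eleven representations $\tau_j$, $1\leq j\leq 11$, defined by $\tau_j(s_i)=\mathrm{diag}(I_{i-1},M_j,I_{n-i-1})$ for all $1\leq i\leq n-1$, where (1) $M_1=\begin{pmatrix}1&0&0\\ d&-1&f\\ 0&0&1\end{pmatrix}$, with $d,f\in\mathbb{C}$; (2) $M_2=\begin{pmatrix}1&0&0\\ 0&-\sqrt{1-fh}&f\\ 0&h&\sqrt{1-fh}\end{pmatrix}$, with $h,f\in\mathbb{C}$; (3) $M_3=\begin{pmatrix}1&0&0\\ 0&\sqrt{1-fh}&f\\ 0&h&-\sqrt{1-fh}\end{pmatrix}$, with $h,f\in\mathbb{C}$; (4) $M_4=\begin{pmatrix}1&b&0\\ 0&-1&0\\ 0&h&1\end{pmatrix}$, with $b,h\in\mathbb{C}$; (5) $M_5=\begin{pmatrix}-\sqrt{1-bd}&b&0\\ d&\sqrt{1-bd}&0\\ 0&0&1\end{pmatrix}$, with $b,d\in\mathbb{C}$; (6) $M_6=\begin{pmatrix}\sqrt{1-bd}&b&0\\ d&-\sqrt{1-bd}&0\\ 0&0&1\end{pmatrix}$, with $b,d\in\mathbb{C}$; (7) $M_7=\mathrm{diag}(1,-1,-1)$; (8) $M_8=\mathrm{diag}(-1,-1,1)$; (9) $M_9=\mathrm{diag}(1,1,1)$; (10) $M_{10}=\mathrm{diag}(-1,-1,-1)$; (11) $M_{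11}=\mathrm{diag}(-1,1,-1)$.
   Context: The twin group $T_n$ ($n\geq 2$) is the group with generators $s_1,\dots,s_{n-1}$ and defining relations $s_i^2=1$ for $1\leq i\leq n-1$ and $s_is_j=s_js_i$ for $|i-j|\geq 2$. A representation $\tau:T_n\to\mathrm{GL}_{n+1}(\mathbb{C})$ is called homogeneous $3$-local if there is a single matrix $M\in\mathrm{GL}_3(\mathbb{C})$ such that $\tau(s_i)=\mathrm{diag}(I_{i-1},M,I_{n-i-1})$ (block-diagonal, with $I_r$ the $r\times r$ identity) for all $1\leq i\leq n-1$. For a complex number $z$, $\sqrt{z}$ denotes a fixed choice of square root. Two representations are equivalent if they are conjugate by an invertible matrix. *)

From HB Require Import structures.
From mathcomp Require Import all_boot all_order all_algebra.
From mathcomp Require Import complex.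
From mathcomp Require Import reals.
Set Implicit Arguments. Unset Strict Implicit. Unset Printing Implicit Defensive.
Import Order.TTheory GRing.Theory Num.Theory.
Local Open Scope ring_scope.

(* The field of complex numbers: R[i] for R a model of the real numbers
   (any [realType]); it is a numClosedFieldType, with the fixed square root
   [sqrtC]. *)

Definition mx3 {C : nzRingType} (a11 a12 a13 a21 a22 a23 a31 a32 a33 : C) : 'M[C]_3 :=
  \matrix_(r < 3, c < 3)
    nth 0 (nth [::] [:: [:: a11; a12; a13]; [:: a21; a22; a23]; [:: a31; a32; a33]] r) c.

(* tau(s_i) = diag(I_{i-1}, M, I_{n-i-1}) in 'M_(n+1), for 1 <= i <= n-1.
   With 0-based indices, the block M occupies rows/columns i-1, i, i+1. *)
Definition local_mx {C : nzRingType} (n : nat) (M : 'M[C]_3) (i : nat) : 'M[C]_(n.+1) :=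
  \matrix_(r, c)
    if [&& i.-1 <= r <= i.+1 & i.-1 <= c <= i.+1]%N
    then M (inord (r - i.-1)) (inord (c - i.-1))
    else (r == c)%:R.

(* The assignment s_i |-> local_mx n M i (1 <= i <= n-1), with M in GL_3,
   defines a representation T_n -> GL_{n+1}: it respects the defining
   relations of the twin group T_n (presentation: s_i^2 = 1, s_i s_j = s_j s_i
   for |i - j| >= 2). *)
Definition hom3local_rep {C : comUnitRingType} (n : nat) (M : 'M[C]_3) : Prop :=
  M \in unitmx /\
  (forall i, (1 <= i <= n.-1)%N -> local_mx n M i *m local_mx n M i = 1%:M) /\
  (forall i j, (1 <= i <= n.-1)%N -> (1 <= j <= n.-1)%N -> (i + 2 <= j)%N ->
     local_mx n M i *m local_mx n M j = local_mx n M j *m local_mx n M i).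

(* Equivalence of the homogeneous 3-local representations given by M and N:
   conjugate by an invertible P on every generator (hence on all of T_n). *)
Definition equiv_local {C : comUnitRingType} (n : nat) (M N : 'M[C]_3) : Prop :=
  exists P : 'M[C]_(n.+1), P \in unitmx /\
    forall i, (1 <= i <= n.-1)%N ->
      P *m local_mx n M i *m invmx P = local_mx n N i.

Section Mats.
Variable C : numClosedFieldType.
Definition M1 (d f : C) := mx3 1 0 0 d (-1) f 0 0 1.
Definition M2 (h f : C) := mx3 1 0 0 0 (- sqrtC (1 - f * h)) f 0 h (sqrtC (1 - f * h)).
Definition M3 (h f : C) := mx3 1 0 0 0 (sqrtC (1 - f * h)) f 0 h (- sqrtC (1 - f * h)).
Definition M4 (b h : C) := mx3 1 b 0 0 (-1) 0 0 h 1.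
Definition M5 (b d : C) := mx3 (- sqrtC (1 - b * d)) b 0 d (sqrtC (1 - b * d)) 0 0 0 1.
Definition M6 (b d : C) := mx3 (sqrtC (1 - b * d)) b 0 d (- sqrtC (1 - b * d)) 0 0 0 1.
Definition M7 : 'M[C]_3 := mx3 1 0 0 0 (-1) 0 0 0 (-1).
Definition M8 : 'M[C]_3 := mx3 (-1) 0 0 0 (-1) 0 0 0 1.
Definition M9 : 'M[C]_3 := mx3 1 0 0 0 1 0 0 0 1.
Definition M10 : 'M[C]_3 := mx3 (-1) 0 0 0 (-1) 0 0 0 (-1).
Definition M11 : 'M[C]_3 := mx3 (-1) 0 0 0 1 0 0 0 (-1).
End Mats.

From HB Require Import structures.
From mathcomp Require Import all_boot all_order all_algebra.
From mathcomp Require Import complex.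
From mathcomp Require Import reals.
Set Implicit Arguments. Unset Strict Implicit. Unset Printing Implicit Defensive.
Import Order.TTheory GRing.Theory Num.Theory.
Local Open Scope ring_scope.

(* On the
   leading 3x3 and 5x5 blocks, where the generators act block-diagonally, they
   say that [M^2 = 1] and that [diag(M, I_2)] commutes with [diag(I_2, M)].
   For [M = [[a,b,c],[d,e,f],[g,h,j]]] the commutation forces [c = g = 0] and
   [f(a-1) = h(a-1) = b(j-1) = d(j-1) = fb = dh = 0].  Splitting on [a = 1] and
   [j = 1], either an involutive 2x2 block splits off (of trace zero, or a
   scalar), or [M] is diagonal, or [e = -1] and the off-diagonal entries lie
   in the middle row or in the middle column.  In every case [M] is literally
   one of [M_1, ..., M_11], so the identity conjugates it to the normal form. *)

Section LocalBlocks.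
Variable R : nzRingType.

Definition corner (m n : nat) (A : 'M[R]_n.+1) : 'M[R]_m.+1 :=
  \matrix_(r, c) A (inord r) (inord c).

Lemma corner_mul m n (A B : 'M[R]_n.+1) :
  (m <= n)%N -> (forall r c : 'I_n.+1, (r <= m < c)%N -> A r c = 0) ->
  corner m (A *m B) = corner m A *m corner m B.
Proof.
move=> le_mn A0; apply/matrixP => r c; rewrite !mxE.
have r_small : (r < n.+1)%N by rewrite (leq_trans (ltn_ord r)).
rewrite (bigID (fun k : 'I_n.+1 => (k < m.+1)%N)) /= [X in _ + X]big1 ?addr0; last first.
  by move=> k; rewrite -leqNgt => mk; rewrite A0 ?mul0r // inordK // -ltnS ltn_ord.
set F := fun k : nat => corner m A r (inord k) * corner m B (inord k) c.
rewrite [RHS](eq_bigr (F \o val)) => [|k _]; last by rewrite /F /= inord_val.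
rewrite (big_ord_widen_cond n.+1 xpredT F) //=.
by apply: eq_bigr => k mk; rewrite /F !mxE !inordK ?inord_val.
Qed.

Lemma corner1 m n : (m <= n)%N -> corner m (1%:M : 'M[R]_n.+1) = 1%:M.
Proof.
move=> le_mn; apply/matrixP => r c; rewrite !mxE -val_eqE /=.
by rewrite !inordK // (leq_trans (ltn_ord _)).
Qed.

Lemma corner_local_mx m n (M : 'M[R]_3) i :
  (m <= n)%N -> corner m (local_mx n M i) = local_mx m M i.
Proof.
move=> le_mn; apply/matrixP => r c; rewrite !mxE -val_eqE /=.
by rewrite !inordK // (leq_trans (ltn_ord _)).
Qed.

Lemma local_mx_offblock n (M : 'M[R]_3) i (r c : 'I_n.+1) :
  (i.+2 <= c)%N -> (r < c)%N -> local_mx n M i r c = 0.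
Proof.
move=> ic rc; rewrite mxE [(c <= i.+1)%N]leqNgt ic !andbF /=.
by rewrite -val_eqE (ltn_eqF rc).
Qed.

Lemma corner_local_mul m n (M : 'M[R]_3) i j : (i < m <= n)%N ->
  corner m (local_mx n M i *m local_mx n M j) = local_mx m M i *m local_mx m M j.
Proof.
case/andP=> im mn; rewrite corner_mul ?corner_local_mx // => r c /andP[rm mc].
by rewrite local_mx_offblock // (leq_trans _ mc).
Qed.

Lemma local_mx1 (M : 'M[R]_3) : local_mx 2 M 1 = M.
Proof. by apply/matrixP => r c; rewrite mxE -!(ltnS _ 2) !ltn_ord !subn0 !inord_val. Qed.

Lemma mx3_ind (P : 'M[R]_3 -> Prop) :
  (forall a b c d e f g h j, P (mx3 a b c d e f g h j)) -> forall M, P M.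
Proof.
move=> IH M.
suff -> : M = mx3 (M (inord 0) (inord 0)) (M (inord 0) (inord 1)) (M (inord 0) (inord 2))
    (M (inord 1) (inord 0)) (M (inord 1) (inord 1)) (M (inord 1) (inord 2))
    (M (inord 2) (inord 0)) (M (inord 2) (inord 1)) (M (inord 2) (inord 2)) by [].
apply/matrixP => r c; rewrite mxE.
by case: r c => [[|[|[|r]]] ?] [[|[|[|c]]] ?] //=; congr (M _ _); apply: val_inj; rewrite /= inordK.
Qed.
End LocalBlocks.

Section FieldFacts.
Variable F : idomainType.
Implicit Types x y : F.

Lemma mulr_fixed_eq0 x y : x * y = x -> y != 1 -> x = 0.
Proof.
move=> xy y1; apply: (@mulIf _ (y - 1)); first by rewrite subr_eq0.
by rewrite mul0r mulrBr mulr1 xy subrr.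
Qed.

Lemma sqrf_eqN1 x : x * x = 1 -> x != 1 -> x = -1.
Proof.
move=> xx x1; have /orP[/eqP x1'|/eqP //] : (x == 1) || (x == -1).
  by rewrite -sqrf_eq1 expr2 xx.
by rewrite x1' eqxx in x1.
Qed.
End FieldFacts.

Lemma addrr_eq0 (D : numDomainType) (x : D) : x + x = 0 -> x = 0.
Proof. by rewrite -mulr2n => /eqP; rewrite mulrn_eq0 => /eqP. Qed.

Section Classification.
Variable C : numClosedFieldType.

Lemma sqr_mx2_eq1 (x y z w : C) :
  x * x + y * z = 1 -> x * y + y * w = 0 -> z * x + w * z = 0 -> z * y + w * w = 1 ->
  (w = - x /\ (x = sqrtC (1 - y * z) \/ x = - sqrtC (1 - y * z)))
  \/ [/\ y = 0, z = 0, w = x & x * x = 1].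
Proof.
move=> s11 s12 s21 s22; have [tr0|tr_neq0] := eqVneq (x + w) 0.
  left; split; first by apply/eqP; rewrite -addr_eq0 addrC tr0.
  have : x ^+ 2 == sqrtC (1 - y * z) ^+ 2 by rewrite sqrtCK -s11 addrK expr2.
  by rewrite eqf_sqr => /orP[]/eqP; [left|right].
have y0 : y = 0 by apply: (mulIf tr_neq0); rewrite mul0r -s12 mulrDr mulrC.
have z0 : z = 0 by apply: (mulIf tr_neq0); rewrite mul0r -s21 mulrDr [z * w]mulrC.
move: s11 s22; rewrite y0 z0 mul0r addr0 add0r => xx ww.
right; split=> //; have : w ^+ 2 == x ^+ 2 by rewrite !expr2 xx ww.
rewrite eqf_sqr => /orP[/eqP // | /eqP wN].
by rewrite wN addrN eqxx in tr_neq0.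
Qed.

Definition normal_form (P : 'M[C]_3 -> 'M[C]_3 -> Prop) (M : 'M[C]_3) : Prop :=
  (exists d f, P M (M1 d f)) \/ (exists h f, P M (M2 h f)) \/
  (exists h f, P M (M3 h f)) \/ (exists b h, P M (M4 b h)) \/
  (exists b d, P M (M5 b d)) \/ (exists b d, P M (M6 b d)) \/
  P M (M7 C) \/ P M (M8 C) \/ P M (M9 C) \/ P M (M10 C) \/ P M (M11 C).

Variables (P : 'M[C]_3 -> 'M[C]_3 -> Prop) (Prefl : forall N, P N N).
Variables a b d e f h j : C.
Hypotheses (sq00 : a * a + b * d = 1) (sq01 : a * b + b * e = 0)
  (sq10 : d * a + e * d = 0) (sq11 : d * b + e * e + f * h = 1)
  (sq12 : e * f + f * j = 0) (sq21 : h * e + j * h = 0) (sq22 : h * f + j * j = 1).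
Hypotheses (fa : f * a = f) (ha : h * a = h) (bj : b * j = b) (dj : d * j = d)
  (fb : f * b = 0) (dh : d * h = 0).

Local Notation M := (mx3 a b 0 d e f 0 h j).

Lemma classify_upper_block : a != 1 -> j = 1 -> M = M5 b d \/ M = M6 b d \/ M = M8 C.
Proof.
move=> a1 j1; have f0 := mulr_fixed_eq0 fa a1; have h0 := mulr_fixed_eq0 ha a1.
have sq11' : d * b + e * e = 1 by rewrite -sq11 f0 mul0r addr0.
rewrite j1 f0 h0; case: (sqr_mx2_eq1 sq00 sq01 sq10 sq11') => [[-> [->|->]] | [-> -> -> aa]].
- by right; left.
- by left; rewrite opprK.
- by right; right; rewrite (sqrf_eqN1 aa a1).
Qed.

Lemma classify_lower_block : a = 1 -> j != 1 -> M = M2 h f \/ M = M3 h f \/ M = M7 C.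
Proof.
move=> a1 j1; have b0 := mulr_fixed_eq0 bj j1; have d0 := mulr_fixed_eq0 dj j1.
have sq11' : e * e + f * h = 1 by rewrite -sq11 d0 mul0r add0r.
rewrite a1 b0 d0; case: (sqr_mx2_eq1 sq11' sq12 sq21 sq22) => [[-> [->|->]] | [-> -> je ee]].
- by right; left.
- by left; rewrite opprK.
- by right; right; rewrite je (sqrf_eqN1 ee) // -je.
Qed.

Lemma classify_outer_ones : a = 1 -> j = 1 -> M = M9 C \/ M = M1 d f \/ M = M4 b h.
Proof.
move=> a1 j1; move: (sq00) (sq01) (sq10) (sq12) (sq21) (sq22).
rewrite a1 j1 !mul1r !mulr1 => s00 s01 s10 s12 s21 s22.
have bd : b * d = 0 by apply: (addrI 1); rewrite addr0.
have hf : h * f = 0 by apply: (addIr 1); rewrite add0r.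
have ee : e * e = 1 by rewrite -sq11 [d * b]mulrC bd [f * h]mulrC hf add0r addr0.
have /orP[/eqP e1|/eqP e1] : (e == 1) || (e == -1) by rewrite -sqrf_eq1 expr2 ee.
  move: s01 s10 s12 s21; rewrite e1 !mul1r !mulr1.
  by move=> /addrr_eq0-> /addrr_eq0-> /addrr_eq0-> /addrr_eq0->; left.
rewrite e1; have [d0|dn0] := eqVneq d 0; first have [f0|fn0] := eqVneq f 0.
- by right; right; rewrite d0 f0.
- have b0 : b = 0 by apply: (mulfI fn0); rewrite fb mulr0.
  have h0 : h = 0 by apply: (mulIf fn0); rewrite hf mul0r.
  by right; left; rewrite b0 h0.
- have b0 : b = 0 by apply: (mulIf dn0); rewrite bd mul0r.
  have h0 : h = 0 by apply: (mulfI dn0); rewrite dh mulr0.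
  by right; left; rewrite b0 h0.
Qed.

Lemma classify_diagonal : a != 1 -> j != 1 -> M = M10 C \/ M = M11 C.
Proof.
move=> a1 j1; have f0 := mulr_fixed_eq0 fa a1; have h0 := mulr_fixed_eq0 ha a1.
have b0 := mulr_fixed_eq0 bj j1; have d0 := mulr_fixed_eq0 dj j1.
have aa : a * a = 1 by rewrite -sq00 b0 mul0r addr0.
have ee : e * e = 1 by rewrite -sq11 b0 f0 mulr0 mul0r add0r addr0.
have jj : j * j = 1 by rewrite -sq22 h0 mul0r add0r.
rewrite f0 h0 b0 d0 (sqrf_eqN1 aa a1) (sqrf_eqN1 jj j1).
have /orP[/eqP ->|/eqP ->] : (e == 1) || (e == -1) by rewrite -sqrf_eq1 expr2 ee.
- by right.
- by left.
Qed.

Ltac pick_normal_form := rewrite /normal_form;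
  repeat first [by left; do ?eexists; apply: Prefl | right]; apply: Prefl.

Lemma normal_form_relations : normal_form P M.
Proof.
have [a1|a1] := eqVneq a 1; have [j1|j1] := eqVneq j 1.
- by case: (classify_outer_ones a1 j1) => [->|[->|->]]; pick_normal_form.
- by case: (classify_lower_block a1 j1) => [->|[->|->]]; pick_normal_form.
- by case: (classify_upper_block a1 j1) => [->|[->|->]]; pick_normal_form.
- by case: (classify_diagonal a1 j1) => [->|->]; pick_normal_form.
Qed.

End Classification.

Ltac mx_entry E r c :=
  lazymatch type of E with
  | @eq (matrix _ ?m ?n) _ _ =>
      move: (congr1 (fun X : matrix _ m n => X (@Ordinal m r isT) (@Ordinal n c isT)) E)
  end;
  rewrite !mxE !big_ord_recr !big_ord0 /= !mxE /= ?inordK //=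
    ?mul0r ?mulr0 ?mul1r ?mulr1 ?add0r ?addr0.

Lemma normal_form_commuting_involution (C : numClosedFieldType)
    (P : 'M[C]_3 -> 'M[C]_3 -> Prop) (Prefl : forall N, P N N) (M : 'M[C]_3) :
  M *m M = 1%:M -> local_mx 4 M 1 *m local_mx 4 M 3 = local_mx 4 M 3 *m local_mx 4 M 1 ->
  normal_form P M.
Proof.
elim/mx3_ind: M => a b c d e f g h j sq cm.
have c0 : c = 0 by mx_entry cm 0%N 4%N => /eqP; rewrite mulf_eq0 orbb => /eqP.
have g0 : g = 0 by mx_entry cm 4%N 0%N => /esym/eqP; rewrite mulf_eq0 orbb => /eqP.
subst c g; apply: (normal_form_relations Prefl).
- by mx_entry sq 0%N 0%N.
- by mx_entry sq 0%N 1%N.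
- by mx_entry sq 1%N 0%N.
- by mx_entry sq 1%N 1%N.
- by mx_entry sq 1%N 2%N.
- by mx_entry sq 2%N 1%N.
- by mx_entry sq 2%N 2%N.
- by mx_entry cm 1%N 2%N.
- by rewrite mulrC; mx_entry cm 2%N 1%N => /esym.
- by rewrite mulrC; mx_entry cm 2%N 3%N.
- by mx_entry cm 3%N 2%N => /esym.
- by mx_entry cm 1%N 3%N.
- by mx_entry cm 3%N 1%N => /esym.
Qed.

Lemma equiv_local_refl (C : comUnitRingType) n (M : 'M[C]_3) : equiv_local n M M.
Proof.
exists 1%:M; split=> [|i _]; first exact: unitmx1.
by rewrite mul1mx invmx1 mulmx1.
Qed.

Theorem theorem3p1 (R : realType) (n : nat) (M : 'M[R[i]]_3) :
  (4 <= n)%N -> hom3local_rep n M ->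
  (exists d f, equiv_local n M (M1 d f)) \/
  (exists h f, equiv_local n M (M2 h f)) \/
  (exists h f, equiv_local n M (M3 h f)) \/
  (exists b h, equiv_local n M (M4 b h)) \/
  (exists b d, equiv_local n M (M5 b d)) \/
  (exists b d, equiv_local n M (M6 b d)) \/
  equiv_local n M (M7 _) \/
  equiv_local n M (M8 _) \/
  equiv_local n M (M9 _) \/
  equiv_local n M (M10 _) \/
  equiv_local n M (M11 _).
Proof.
case: n => [|[|[|[|k]]]] // _ [_ [sqr comm]].
have sqM : M *m M = 1%:M.
  by rewrite -{1 2}(local_mx1 M) -(@corner_local_mul _ 2 k.+4) // sqr // corner1.
have comm13 : local_mx 4 M 1 *m local_mx 4 M 3 = local_mx 4 M 3 *m local_mx 4 M 1.
  by rewrite -!(@corner_local_mul _ 4 k.+4) // comm.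
exact: (normal_form_commuting_involution (@equiv_local_refl _ k.+4) sqM comm13).
Qed.
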